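(* Let $k\geq 1$ be a fixed integer. Then almost surely $$\kappa_3\!\left(G\!\left(n,\tfrac{1}{2}\cdot\frac{\log n+(k+1)\log\log n-\log\log\log n}{n}\right)\right)\leq k-1.$$
   Context: $\log$ is the natural logarithm; $G(n,p)$ is the binomial random graph on $n$ vertices, $n\to\infty$, and ''almost surely'' means with probability tending to $1$. For $S\subseteq V(G)$, trees $T_1,\dots,T_k$ are internally disjoint trees connecting $S$ if $S\subseteq V(T_i)$, $E(T_i)\cap E(T_j)=\emptyset$ and $V(T_i)\cap V(T_j)=S$ for $i\neq j$; $\kappa(S)$ is the maximum number of such trees and $\kappa_3(G)=\min\{\kappa(S):|S|=3\}$, with $\kappa_3(G)=0$ if $G$ is disconnected. *)

From HB Require Import structures.
From mathcomp Require Import all_boot all_order all_algebra.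
From mathcomp Require Import all_classical all_reals all_analysis.
Set Implicit Arguments. Unset Strict Implicit. Unset Printing Implicit Defensive.
Import Order.TTheory GRing.Theory Num.Theory.

(* A graph on vertex set 'I_n is given by its edge set E : {set {set 'I_n}};
   edges are 2-element subsets of 'I_n. *)
Definition pairs (n : nat) : {set {set 'I_n}} := [set e : {set 'I_n} | #|e| == 2].

Definition adj (n : nat) (E : {set {set 'I_n}}) : rel 'I_n :=
  fun x y => (x != y) && ([set x; y] \in E).

Definition connectedb (n : nat) (E : {set {set 'I_n}}) : bool :=
  [forall u, forall v, connect (adj E) u v].

Definition acyclic (n : nat) (ET : {set {set 'I_n}}) : Prop :=
  ~ exists s : seq 'I_n, [&& uniq s, 2 < size s & cycle (adj ET) s].

Definition is_tree_in (n : nat) (E : {set {set 'I_n}})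
    (VT : {set 'I_n}) (ET : {set {set 'I_n}}) : Prop :=
  [/\ ET \subset E,
      (forall e, e \in ET -> (#|e| == 2) && (e \subset VT)),
      (0 < #|VT|)%N,
      (forall u v, u \in VT -> v \in VT -> connect (adj ET) u v)
    & acyclic ET].

Definition has_idtrees (n : nat) (E : {set {set 'I_n}}) (S : {set 'I_n})
    (m : nat) : Prop :=
  exists T : 'I_m -> {set 'I_n} * {set {set 'I_n}},
    (forall i, is_tree_in E (T i).1 (T i).2 /\ S \subset (T i).1) /\
    (forall i j, i != j ->
        [disjoint (T i).2 & (T j).2] /\ (T i).1 :&: (T j).1 = S).

(* kappa(S): maximum number of internally disjoint trees connecting S.
   For |S| = 3 each such tree has >= 2 edges and they are edge-disjoint,
   so the maximum is attained below 'C(n,2).+1. *)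
Definition kappaS (n : nat) (E : {set {set 'I_n}}) (S : {set 'I_n}) : nat :=
  \max_(m < 'C(n, 2).+1 | `[< has_idtrees E S m >]) m.

Definition kappa3 (n : nat) (E : {set {set 'I_n}}) : nat :=
  if connectedb E then \big[minn/'C(n, 2)]_(S : {set 'I_n} | #|S| == 3) kappaS E S
  else 0.

Definition Gnp_prob (R : realType) (n : nat) (p : R)
    (P : pred {set {set 'I_n}}) : R :=
  (\sum_(E : {set {set 'I_n}} | (E \subset pairs n) && P E)
     p ^+ #|E| * (1 - p) ^+ ('C(n, 2) - #|E|))%R.

Definition p_thm4 (R : realType) (k n : nat) : R :=
  (2^-1 * ((ln (n%:R : R) + (k.+1)%:R * ln (ln (n%:R : R))
            - ln (ln (ln (n%:R : R)))) / n%:R))%R.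

(* The edge probability p is about (ln n) / (2 n), below the connectivity
   threshold ln n / n.  The number X of isolated vertices of G(n,p) has mean
   mu >= n (1 - p)^(n-1), which tends to infinity, and since two vertex stars
   share at most one edge, E[X^2] <= mu + mu^2 / (1 - p).  Chebyshev's
   inequality then gives P(X = 0) <= 1/mu + p/(1 - p) -> 0, so G(n,p) almost
   surely has an isolated vertex; a disconnected graph has kappa_3 = 0. *)

From HB Require Import structures.
From mathcomp Require Import all_boot all_order all_algebra.
From mathcomp Require Import all_classical all_reals all_analysis.
From mathcomp Require Import ring lra zify.
Import Order.TTheory GRing.Theory Num.Theory numFieldNormedType.Exports.
Set Implicit Arguments. Unset Strict Implicit. Unset Printing Implicit Defensive.
Local Open Scope ring_scope.

Section BinomialSubsets.
Variables (R : realType) (T : finType).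

Lemma sum_subsets_binomial (V : {set T}) (p : R) :
  \sum_(E : {set T} | E \subset V) p ^+ #|E| * (1 - p) ^+ (#|V| - #|E|) = 1.
Proof.
pose F (i : nat) := p ^+ i * (1 - p) ^+ (#|V| - i).
have cardV (E : {set T}) : E \subset V -> (#|E| < #|V|.+1)%N.
  by move=> sEV; rewrite ltnS subset_leq_card.
rewrite (partition_big (fun E : {set T} => (inord #|E| : 'I_#|V|.+1)) predT) //=.
transitivity (\sum_(i < #|V|.+1) F i *+ 'C(#|V|, i)).
  apply: eq_bigr => i _; rewrite -cards_draws -sumr_const.
  apply: eq_big => [E|E /andP[sEV /eqP <-]]; last by rewrite /F inordK ?cardV.
  rewrite !inE; case: (boolP (E \subset V)) => //= sEV.
  by apply/eqP/eqP => [<-|->]; [rewrite inordK ?cardV | apply: val_inj; rewrite /= inordK].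
have := exprDn (1 - p) p #|V|; rewrite subrK expr1n => ->.
by apply: eq_bigr => i _; rewrite /F mulrC.
Qed.

Lemma sum_subsets_avoid (U D : {set T}) (p : R) : D \subset U ->
  \sum_(E : {set T} | (E \subset U) && [disjoint E & D])
     p ^+ #|E| * (1 - p) ^+ (#|U| - #|E|) = (1 - p) ^+ #|D|.
Proof.
move=> sDU; have cUD : #|U :\: D| = (#|U| - #|D|)%N.
  by rewrite cardsD (finset.setIidPr sDU).
have leDU : (#|D| <= #|U|)%N by apply: subset_leq_card.
under eq_bigl => E do rewrite -subsetD.
rewrite -[RHS]mul1r -[X in X * _](sum_subsets_binomial (U :\: D) p) mulr_suml.
apply: eq_bigr => E sE; have := subset_leq_card sE; rewrite cUD => leE.
by rewrite -mulrA -exprD; congr (_ * _ ^+ _); lia.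
Qed.

End BinomialSubsets.

Section Gnp.
Variables (R : realType) (n : nat).
Implicit Types (p : R) (E : {set {set 'I_n}}) (P Q : pred {set {set 'I_n}}).

Definition Gnp_weight p E : R := p ^+ #|E| * (1 - p) ^+ ('C(n, 2) - #|E|).

Definition Gnp_mean p (X : {set {set 'I_n}} -> R) : R :=
  \sum_(E : {set {set 'I_n}} | E \subset pairs n) Gnp_weight p E * X E.

Lemma card_pairs : #|pairs n| = 'C(n, 2).
Proof. by rewrite /pairs card_draws card_ord. Qed.

Lemma Gnp_weight_ge0 p E : 0 <= p <= 1 -> 0 <= Gnp_weight p E.
Proof. by case/andP=> p0 p1; rewrite mulr_ge0 ?exprn_ge0 ?subr_ge0. Qed.

Lemma Gnp_mean_indicator p P : Gnp_mean p (fun E => (P E)%:R) = Gnp_prob p P.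
Proof.
rewrite /Gnp_mean /Gnp_prob big_mkcondr /=.
by apply: eq_bigr => E _; case: (P E); rewrite ?mulr1 ?mulr0.
Qed.

Lemma Gnp_mean1 p : Gnp_mean p (fun=> 1) = 1.
Proof.
rewrite /Gnp_mean; under eq_bigr do rewrite mulr1.
by rewrite /Gnp_weight -card_pairs sum_subsets_binomial.
Qed.

Lemma Gnp_mean_le p (X Y : {set {set 'I_n}} -> R) : 0 <= p <= 1 ->
  (forall E, X E <= Y E) -> Gnp_mean p X <= Gnp_mean p Y.
Proof. by move=> p01 XY; apply: ler_sum => E _; rewrite ler_wpM2l ?Gnp_weight_ge0. Qed.

Lemma Gnp_mean_sum p (I : Type) (r : seq I) (F : I -> {set {set 'I_n}} -> R) :
  Gnp_mean p (fun E => \sum_(i <- r) F i E) = \sum_(i <- r) Gnp_mean p (F i).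
Proof.
rewrite /Gnp_mean; under eq_bigr do rewrite mulr_sumr.
by rewrite exchange_big.
Qed.

Lemma Gnp_prob_le1 p P : 0 <= p <= 1 -> Gnp_prob p P <= 1.
Proof.
move=> p01; rewrite -Gnp_mean_indicator -[X in _ <= X](Gnp_mean1 p).
by apply: Gnp_mean_le => // E; case: (P E); rewrite ?ler01.
Qed.

Lemma Gnp_prob_compl_le p P Q : 0 <= p <= 1 ->
  (forall E, ~~ P E -> Q E) -> 1 - Gnp_prob p P <= Gnp_prob p Q.
Proof.
move=> p01 PQ; rewrite -!Gnp_mean_indicator -[X in X - _](Gnp_mean1 p) -sumrB.
under eq_bigr do rewrite -mulrBr.
apply: (@Gnp_mean_le _ (fun E => 1 - (P E)%:R)) => // E.
by case: (boolP (P E)) => [_|/PQ ->]; rewrite ?subrr ?subr0 ?ler0n.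
Qed.

Lemma Gnp_prob_avoid p (D : {set {set 'I_n}}) : D \subset pairs n ->
  Gnp_prob p (fun E => [disjoint E & D]) = (1 - p) ^+ #|D|.
Proof. by move=> sD; rewrite /Gnp_prob -card_pairs sum_subsets_avoid. Qed.

Lemma Gnp_second_moment p (X : {set {set 'I_n}} -> R) :
  0 <= p <= 1 -> 0 < Gnp_mean p X ->
  Gnp_prob p (fun E => X E == 0) <=
    Gnp_mean p (fun E => X E ^+ 2) / Gnp_mean p X ^+ 2 - 1.
Proof.
move=> p01; set mu := Gnp_mean p X => mu0.
have mu2 : mu ^+ 2 != 0 by rewrite expf_neq0 // gt_eqF.
rewrite -Gnp_mean_indicator.
apply: (@le_trans _ _ (Gnp_mean p (fun E => (X E - mu) ^+ 2 / mu ^+ 2))).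
  apply: Gnp_mean_le => // E; case: eqP => [->|_].
    by rewrite sub0r sqrrN divff.
  by rewrite divr_ge0 ?sqr_ge0.
have expand E : Gnp_weight p E * ((X E - mu) ^+ 2 / mu ^+ 2) =
    Gnp_weight p E * X E ^+ 2 / mu ^+ 2 - 2 / mu * (Gnp_weight p E * X E)
    + Gnp_weight p E * 1.
  by field; rewrite gt_eqF.
rewrite /Gnp_mean (eq_bigr _ (fun E _ => expand E)) big_split sumrB /=.
rewrite -mulr_suml -mulr_sumr -/mu.
rewrite -[\sum_(E | _) Gnp_weight p E * 1]/(Gnp_mean p (fun=> 1)) Gnp_mean1.
by rewrite mulfVK ?gt_eqF //; lra.
Qed.

End Gnp.

Section IsolatedVertices.
Variables (R : realType) (n : nat).
Implicit Types (p : R) (E : {set {set 'I_n}}) (i j : 'I_n).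

Definition incident i : {set {set 'I_n}} := [set e in pairs n | i \in e].

Definition isolated E i : bool := [disjoint E & incident i].

Definition num_isolated E : R := \sum_i (isolated E i)%:R.

Lemma incident_sub i : incident i \subset pairs n.
Proof. by apply/fintype.subsetP => e; rewrite inE => /andP[]. Qed.

Lemma card_incident i : (#|incident i| <= n.-1)%N.
Proof.
have sub : incident i \subset [set [set i; j] | j in [set~ i]].
  apply/fintype.subsetP => e; rewrite !inE => /andP[/cards2P [x [y [xy ->]]]].
  rewrite !inE => /orP[]/eqP->; apply/imsetP.
    by exists y; rewrite // !inE eq_sym.
  by exists x; rewrite ?inE // finset.setUC.
apply: leq_trans (subset_leq_card sub) _; apply: leq_trans (leq_imset_card _ _) _.
by rewrite cardsC1 card_ord.
Qed.

Lemma card_incidentI i j : i != j -> (#|incident i :&: incident j| <= 1)%N.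
Proof.
move=> ij; have sub : incident i :&: incident j \subset [set [set i; j]].
  apply/fintype.subsetP => e; rewrite !inE => /andP[/andP[e2 ie] /andP[_ je]].
  rewrite eq_sym eqEcard; apply/andP; split.
    by apply/fintype.subsetP => x; rewrite !inE => /orP[]/eqP->.
  by rewrite (eqP e2) cards2 ij.
by rewrite -(cards1 [set i; j]) subset_leq_card.
Qed.

Lemma isolated_disconnected E i : (1 < n)%N -> isolated E i -> ~~ connectedb E.
Proof.
move=> n1 iso_i; have : (0 < #|[set~ i]|)%N by rewrite cardsC1 card_ord; lia.
case/card_gt0P => j; rewrite !inE => ji.
apply/negP => /forallP /(_ i) /forallP /(_ j) /connectP [[|y s] /= pth lst].
  by move: ji; rewrite lst eqxx.
case/andP: pth => /andP[iy iyE] _.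
have : [set i; y] \in incident i by rewrite !inE cards2 iy eqxx.
by rewrite (disjointFr iso_i iyE).
Qed.

Lemma Gnp_mean_isolated p :
  Gnp_mean p num_isolated = \sum_i (1 - p) ^+ #|incident i|.
Proof.
rewrite Gnp_mean_sum; apply: eq_bigr => i _.
by rewrite Gnp_mean_indicator Gnp_prob_avoid ?incident_sub.
Qed.

Lemma Gnp_mean_isolated_sqr p :
  Gnp_mean p (fun E => num_isolated E ^+ 2) =
  \sum_i \sum_j (1 - p) ^+ #|incident i :|: incident j|.
Proof.
have sqrE E : num_isolated E ^+ 2 =
    \sum_i \sum_j ([disjoint E & incident i :|: incident j])%:R.
  rewrite expr2 /num_isolated mulr_suml; apply: eq_bigr => i _.
  rewrite mulr_sumr; apply: eq_bigr => j _.
  by rewrite -natrM mulnb /isolated !finset.disjoints_subset finset.setCU finset.subsetI.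
rewrite (_ : Gnp_mean p _ = Gnp_mean p (fun E =>
   \sum_i \sum_j ([disjoint E & incident i :|: incident j])%:R)); last first.
  by apply: eq_bigr => E _; rewrite sqrE.
rewrite Gnp_mean_sum.
apply: eq_bigr => i _; rewrite Gnp_mean_sum; apply: eq_bigr => j _.
by rewrite Gnp_mean_indicator Gnp_prob_avoid // finset.subUset !incident_sub.
Qed.

Lemma Gnp_mean_isolated_sqr_le p : 0 <= p < 1 ->
  Gnp_mean p (fun E => num_isolated E ^+ 2) <=
  Gnp_mean p num_isolated + Gnp_mean p num_isolated ^+ 2 / (1 - p).
Proof.
move=> /andP[p0 p1]; rewrite Gnp_mean_isolated; set a := 1 - p.
have a0 : 0 < a by rewrite subr_gt0.
have a1 : a <= 1 by rewrite lerBlDr lerDl.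
have pair_le i j : a ^+ #|incident i :|: incident j| <=
    (if j == i then a ^+ #|incident i| else 0) + a ^+ #|incident i| * a ^+ #|incident j| / a.
  case: eqVneq => [->|ji].
    by rewrite finset.setUid lerDl divr_ge0 ?mulr_ge0 ?exprn_ge0 // ltW.
  rewrite add0r ler_pdivlMr // -exprSr -exprD; apply: ler_wiXn2l => //; first exact: ltW.
  rewrite eq_sym in ji; have := card_incidentI ji.
  have := cardsUI (incident i) (incident j); lia.
rewrite Gnp_mean_isolated_sqr.
apply: le_trans (ler_sum _ (fun i _ => ler_sum _ (fun j _ => pair_le i j))) _.
rewrite le_eqVlt; apply/orP; left; apply/eqP.
under eq_bigr => i _ do rewrite big_split /= -big_mkcond big_pred1_eq.
rewrite big_split /= expr2 mulr_suml; congr (_ + _).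
by rewrite mulr_suml; apply: eq_bigr => i _; rewrite mulr_sumr mulr_suml.
Qed.

Lemma Gnp_no_isolated_le p : (1 < n)%N -> 0 <= p <= 2^-1 ->
  Gnp_prob p (fun E => num_isolated E == 0) <= (n%:R * (1 - p) ^+ n.-1)^-1 + 2 * p.
Proof.
move=> n1 /andP[p0 p12]; set a := 1 - p.
have a0 : 0 < a by rewrite /a; lra.
have p01 : 0 <= p <= 1 by apply/andP; split; lra.
have p1 : 0 <= p < 1 by apply/andP; split; lra.
set mu := Gnp_mean p num_isolated.
have mu_ge : n%:R * a ^+ n.-1 <= mu.
  apply: le_trans (_ : \sum_(i : 'I_n) a ^+ n.-1 <= _).
    by rewrite sumr_const card_ord mulr_natl.
  rewrite /mu Gnp_mean_isolated; apply: ler_sum => i _.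
  by apply: ler_wiXn2l; [exact: ltW | rewrite /a; lra | exact: card_incident].
have n_a0 : 0 < n%:R * a ^+ n.-1 by rewrite mulr_gt0 ?exprn_gt0 // ltr0n; lia.
have mu0 := lt_le_trans n_a0 mu_ge.
apply: le_trans (Gnp_second_moment p01 mu0) _.
apply: le_trans (_ : (mu + mu ^+ 2 / a) / mu ^+ 2 - 1 <= _).
  rewrite lerD2r; apply: ler_wpM2r; last exact: Gnp_mean_isolated_sqr_le.
  by rewrite invr_ge0 exprn_ge0 // ltW.
have -> : (mu + mu ^+ 2 / a) / mu ^+ 2 - 1 = mu^-1 + p / a.
  by rewrite /a; field; rewrite !gt_eqF //; lra.
apply: lerD; first by rewrite lef_pV2 ?posrE.
by rewrite ler_pdivrMr // /a; nra.
Qed.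

Lemma Gnp_kappa3_le p m : (1 < n)%N -> 0 <= p <= 2^-1 ->
  1 - Gnp_prob p (fun E => (kappa3 E <= m)%N) <= (n%:R * (1 - p) ^+ n.-1)^-1 + 2 * p.
Proof.
move=> n1 p12; apply: le_trans (Gnp_no_isolated_le n1 p12).
apply: Gnp_prob_compl_le => [|E kappa_gt]; first by case/andP: p12 => -> ?; lra.
have conn : connectedb E by apply: contraR kappa_gt => /negbTE nc; rewrite /kappa3 nc.
rewrite /num_isolated big1 // => i _.
have /negbTE -> // : ~~ isolated E i by exact: contraL (isolated_disconnected n1) conn.
Qed.

End IsolatedVertices.

Local Open Scope classical_set_scope.

Section LnBounds.
Variable R : realType.
Implicit Types x y c : R.

Lemma ln_le_subr1 x : 0 < x -> ln x <= x - 1.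
Proof. by move=> x0; have := @le_ln1Dx R (x - 1); rewrite (addrC 1) subrK; apply; lra. Qed.

Lemma ln_sqr_le x : 1 <= x -> ln x ^+ 2 <= 4 * x.
Proof.
move=> x1; set s := Num.sqrt x.
have ss : s * s = x by rewrite -expr2 sqr_sqrtr //; lra.
have s1 : 1 <= s by rewrite -sqrtr1 ler_wsqrtr.
have -> : ln x = ln s + ln s by rewrite -ss lnM ?posrE //; lra.
have := ln_le_subr1 (lt_le_trans ltr01 s1); have := ln_ge0 s1.
rewrite -ss; nra.
Qed.

(* The tangent line of [ln] at [4 c]. *)
Lemma mul_ln_le c y : 0 < c -> 0 < y -> c * ln y <= c * (ln (4 * c) - 1) + y / 4.
Proof.
move=> c0 y0; have c4 : 0 < 4 * c by lra.
have := ln_le_subr1 (divr_gt0 y0 c4); rewrite ln_div ?posrE // => h.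
have := ler_wpM2l (ltW c0) h.
have -> : c * (y / (4 * c) - 1) = y / 4 - c by field; rewrite gt_eqF.
lra.
Qed.

Lemma expR_le_1B x : 0 <= x <= 2^-1 -> expR (- (x + 2 * x ^+ 2)) <= 1 - x.
Proof.
case/andP=> x0 x12; have a0 : 0 < 1 - x by lra.
have le_xa : x / (1 - x) <= x + 2 * x ^+ 2 by rewrite ler_pdivrMr //; nra.
apply: le_trans (_ : expR (- (x / (1 - x))) <= _); first by rewrite ler_expR lerN2.
have := expR_ge1Dx (x / (1 - x)).
have -> : 1 + x / (1 - x) = (1 - x)^-1 by field; rewrite gt_eqF.
by move=> h; rewrite expRN -[X in _ <= X]invrK lef_pV2 ?posrE ?expR_gt0 ?invr_gt0.
Qed.

Lemma mul_pow_1B_ge x m : (0 < m)%N -> 0 <= x <= 2^-1 ->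
  expR (ln m%:R - m%:R * (x + 2 * x ^+ 2)) <= m%:R * (1 - x) ^+ m.-1.
Proof.
move=> m0 x12; have m_pos : 0 < m%:R :> R by rewrite ltr0n.
rewrite expRD lnK ?posrE // ler_pM2l // -mulrN expRM_natl.
apply: le_trans (lerXn2r _ _ _ (expR_le_1B x12)) _; rewrite ?nnegrE ?expR_ge0 //.
  by case/andP: x12 => *; lra.
apply: ler_wiXn2l; rewrite ?leq_pred //; case/andP: x12 => *; lra.
Qed.

Lemma lt0n_ln (m : nat) : 0 < ln (m%:R : R) -> (0 < m)%N.
Proof. by case: m => // /lt_le_trans/(_ (ln_le0 ler01)); rewrite ltxx. Qed.

Lemma near_ln_ge (M : R) : \forall n \near \oo, M <= ln (n%:R : R).
Proof.
near=> n; rewrite -(expRK M) ler_ln ?posrE ?expR_gt0 //.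
  by near: n; exact: nbhs_infty_ger.
by apply: lt_le_trans (expR_gt0 M) _; near: n; exact: nbhs_infty_ger.
Unshelve. all: by end_near.
Qed.

End LnBounds.

Section EdgeProbability.
Variables (R : realType) (k : nat).
Let K : R := k.+1%:R.
Let C : R := `|K * (ln (4 * K) - 1)|.

Lemma p_thm4_bounds n : expR 1 <= ln (n%:R : R) ->
  [/\ 0 <= p_thm4 R k n, n%:R * p_thm4 R k n <= 5 / 8 * ln (n%:R : R) + C / 2
    & 3 / 8 * ln (n%:R : R) - C / 2 <= ln (n%:R : R) - n%:R * p_thm4 R k n].
Proof.
set L := ln (n%:R : R) => L_ge.
have L_pos : 0 < L by have := expR_gt0 (1 : R); lra.
have n_pos : 0 < n%:R :> R by rewrite ltr0n (@lt0n_ln R).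
have L2_ge1 : 1 <= ln L by rewrite -(expRK 1) ler_ln ?posrE ?expR_gt0.
have L3_ge0 := ln_ge0 L2_ge1.
have L3_le := ln_le_subr1 (lt_le_trans ltr01 L2_ge1).
have K_ge1 : 1 <= K by rewrite /K ler1n.
have KL2_le : K * ln L <= C + L / 4.
  have := mul_ln_le (lt_le_trans ltr01 K_ge1) L_pos.
  by have := ler_norm (K * (ln (4 * K) - 1)); rewrite -/C; lra.
have np : n%:R * p_thm4 R k n = (L + K * ln L - ln (ln L)) / 2.
  by rewrite /p_thm4 -/L; field; rewrite gt_eqF.
have np_ge0 : 0 <= n%:R * p_thm4 R k n by rewrite np; nra.
split; [by rewrite -(pmulr_rge0 _ n_pos) | rewrite np; lra | rewrite np; lra].
Qed.

Lemma n_p_thm4_sqr_le n : expR 1 <= ln (n%:R : R) ->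
  n%:R * p_thm4 R k n ^+ 2 <= 4 + C ^+ 2.
Proof.
set L := ln (n%:R : R) => L_ge; have [p0 np_le _] := p_thm4_bounds L_ge.
have L_pos : 0 < L by have := expR_gt0 (1 : R); lra.
have n_ge1 : 1 <= n%:R :> R by rewrite ler1n (@lt0n_ln R).
have C0 : 0 <= C by exact: normr_ge0.
have L2_le := ln_sqr_le n_ge1; rewrite -/L in L2_le.
have np0 : 0 <= n%:R * p_thm4 R k n by rewrite mulr_ge0.
have np2_le : (n%:R * p_thm4 R k n) ^+ 2 <= (5 / 8 * L + C / 2) ^+ 2.
  by rewrite lerXn2r ?nnegrE //; lra.
have C2_le : C ^+ 2 <= n%:R * C ^+ 2 by rewrite ler_peMl ?sqr_ge0.
have : n%:R * (n%:R * p_thm4 R k n ^+ 2) <= n%:R * (4 + C ^+ 2).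
  rewrite mulrA -expr2 -exprMn; nra.
by rewrite ler_pM2l //; lra.
Qed.

Lemma p_thm4_cvg0 : p_thm4 R k n @[n --> \oo] --> 0.
Proof.
apply/cvgr0Pnorm_lt => e e0; near=> n.
have L_ge : expR 1 <= ln (n%:R : R) by near: n; exact: near_ln_ge.
have [p0 _ _] := p_thm4_bounds L_ge; rewrite ger0_norm //.
have n_gt : (4 + C ^+ 2) / e ^+ 2 < n%:R by near: n; exact: nbhs_infty_gtr.
rewrite ltr_pdivrMr ?exprn_gt0 // in n_gt.
have n_pos : 0 < n%:R :> R by near: n; exact: nbhs_infty_gtr.
have : p_thm4 R k n ^+ 2 < e ^+ 2.
  by rewrite -(ltr_pM2l n_pos); have := n_p_thm4_sqr_le L_ge; lra.
by rewrite ltr_pXn2r ?nnegrE // ltW.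
Unshelve. all: by end_near.
Qed.

Lemma p_thm4_near_half : \forall n \near \oo, 0 <= p_thm4 R k n <= 2^-1.
Proof.
near=> n; apply/andP; split.
  by have [] // := @p_thm4_bounds n; near: n; exact: near_ln_ge.
by apply/ltW; near: n; apply: (cvgr_lt _ p_thm4_cvg0); rewrite invr_gt0.
Unshelve. all: by end_near.
Qed.

Lemma n_1Bp_thm4_pow_cvgy : n%:R * (1 - p_thm4 R k n) ^+ n.-1 @[n --> \oo] --> +oo.
Proof.
apply/cvgryPge => M; near=> n.
have L_ge : expR 1 <= ln (n%:R : R) by near: n; exact: near_ln_ge.
have [_ _ np_ge] := p_thm4_bounds L_ge.
have n0 : (0 < n)%N by near: n; exact: nbhs_infty_gt.
apply: le_trans (mul_pow_1B_ge n0 _); last by near: n; exact: p_thm4_near_half.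
have L_ge' : 8 / 3 * (M + C / 2 + 2 * (4 + C ^+ 2)) <= ln (n%:R : R).
  by near: n; exact: near_ln_ge.
have := expR_ge1Dx (ln (n%:R : R) - n%:R * (p_thm4 R k n + 2 * p_thm4 R k n ^+ 2)).
have := n_p_thm4_sqr_le L_ge; rewrite mulrDr mulrCA; lra.
Unshelve. all: by end_near.
Qed.

End EdgeProbability.

Local Close Scope ring_scope.

Theorem theorem4 (R : realType) (k : nat) : (1 <= k)%N ->
  ((fun n : nat => @Gnp_prob R n (p_thm4 R k n) (fun E => (kappa3 E <= k.-1)%N))
     @ \oo --> (1%R : R))%classic.
Proof.
move=> _; set p := p_thm4 R k.
set s := fun n : nat => (n%:R * (1 - p n) ^+ n.-1)%R.
have s_gt0 : \forall n \near \oo, (0 < s n)%R.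
  by have /cvgryPgt := @n_1Bp_thm4_pow_cvgy R k; apply.
have bound_cvg0 : ((s n)^-1 + 2 * p n)%R @[n --> \oo] --> 0%R.
  rewrite -[0%R]addr0 -[X in (_ + X)%R](mulr0 2%R).
  apply: cvgD; first exact/(gtr0_cvgV0 s_gt0)/n_1Bp_thm4_pow_cvgy.
  exact: cvgMl_tmp (@p_thm4_cvg0 R k).
apply: (squeeze_cvgr (f := fun n => (1 - ((s n)^-1 + 2 * p n))%R) (h := cst 1%R)).
- near=> n; have /andP[p0 p12] : (0 <= p n <= 2^-1)%R.
    by near: n; exact: p_thm4_near_half.
  have n1 : (1 < n)%N by near: n; exact: nbhs_infty_gt.
  apply/andP; split; last by apply: Gnp_prob_le1; rewrite p0 /=; lra.
  by rewrite lerBlDr -lerBlDl; apply: Gnp_kappa3_le; rewrite ?p0.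
- by rewrite -[X in _ --> X]subr0; apply: cvgB; [exact: cvg_cst | exact: bound_cvg0].
- exact: cvg_cst.
Unshelve. all: by end_near.
Qed.
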